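(* For a supersimple $2$-$(n,4,\lambda)$ design $\mathcal{D}=(\Omega,\mathcal{B})$, the following are equivalent: (i) for all $a,b,c,d\in\Omega$, $[a,b]^{[c,d]}=[a^{[c,d]},b^{[c,d]}]$; (ii) for all $a,b,c\in\Omega$, $[a,b]^{[b,c]}=[a^{[b,c]},c]$; (iii) for all $a,b,c\in\Omega$, $[b,c]=[a,b,c,a^{[b,c]}]$. In addition, if these conditions hold, then $\mathcal{L}_\infty(\mathcal{D})$ (for $\infty\in\Omega$) is a group of automorphisms of $\mathcal{D}$.
   Context: A $2$-$(n,4,\lambda)$ design $(\Omega,\mathcal{B})$: $n$ points, a multiset of $4$-subsets (lines), every $2$-subset in exactly $\lambda$ lines; supersimple: distinct lines meet in at most two points. For distinct $a,b$ with lines $\{a,b,a_i,b_i\}$ through them, $[a,b]:=(a,b)\prod_i(a_i,b_i)\in\operatorname{Sym}(\Omega)$; $[a,a]:=1$. Permutations act on the right ($x^g$), products composed left to right, and $g^h=h^{-1}gh$. Move sequence $[a_0,\dots,a_k]:=[a_0,a_1][a_1,a_2]\cdots[a_{k-1},a_k]$; $\mathcal{L}_\infty(\mathcal{D})$ is the set of all move sequences starting at $\infty$. *)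

From mathcomp Require Import all_boot all_fingroup.
Set Implicit Arguments. Unset Strict Implicit. Unset Printing Implicit Defensive.


Section Designs.
Variable T : finType.

(* Blocks are given as a list (multiset) of subsets of the point set T. *)

Definition design_2_4 (n lambda : nat) (B : seq {set T}) : Prop :=
  [/\ #|T| = n,
      (forall L, L \in B -> #|L| = 4)
    & (forall x y : T, x != y ->
         count (fun L : {set T} => (x \in L) && (y \in L)) B = lambda)].

Definition supersimple (B : seq {set T}) : Prop :=
  forall i j, i < size B -> j < size B -> i != j ->
    #|nth set0 B i :&: nth set0 B j| <= 2.

Definition pairperm (S : {set T}) : {perm T} :=
  match enum S with
  | [:: x; y] => tperm x y
  | _ => 1%g
  end.

Definition br (B : seq {set T}) (a b : T) : {perm T} :=
  if a == b then 1%g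
  else (tperm a b *
       \prod_(L <- B | (a \in L) && (b \in L)) pairperm (L :\ a :\ b))%g.

(* move sequence [a, s_1, ..., s_k] = [a,s_1][s_1,s_2]...[s_{k-1},s_k] *)
Fixpoint moveseq (B : seq {set T}) (a : T) (s : seq T) : {perm T} :=
  match s with
  | [::] => 1%g
  | b :: s' => (br B a b * moveseq B b s')%g
  end.

Definition Linf (B : seq {set T}) (oo : T) (g : {perm T}) : Prop :=
  exists s : seq T, g = moveseq B oo s.

Definition design_aut (B : seq {set T}) (g : {perm T}) : Prop :=
  perm_eq [seq (g @: L) | L : {set T} <- B] B.

End Designs.

From mathcomp Require Import all_boot all_fingroup.
Set Implicit Arguments. Unset Strict Implicit. Unset Printing Implicit Defensive.
Local Open Scope group_scope.

(* Supersimplicity forces two lines through points a and b to meet only in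
   {a, b}, so [a,b] is a product of disjoint transpositions: it swaps a and b,
   swaps the two remaining points of every line through them, and fixes every
   other point.  In particular [a,b] is an involution, and then (i), (ii) and
   (iii) are rewritings of one another in the group generated by all brackets.
   Condition (iii) allows any bracket to be appended to a move sequence, so
   L_oo is that whole group.  Each line is {x, y, u, [x,y]u} for any three of
   its points, and under (i) conjugation by g = [c,d] maps this to
   {gx, gy, gu, [gx,gy](gu)}, which is again a line; hence every move
   sequence permutes the lines. *)

Section PermProducts.
Variable T : finType.

Lemma pairpermK (S : {set T}) : involutive (pairperm S).
Proof. by rewrite /pairperm; case: (enum S) => [|x [|y [|? ?]]] z; rewrite ?perm1 ?tpermK. Qed.

Lemma pairperm_fix (S : {set T}) w : w \notin S -> pairperm S w = w.
Proof.
rewrite /pairperm -mem_enum; case: (enum S) => [|x [|y [|? ?]]]; rewrite ?perm1 //.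
by rewrite !inE negb_or => /andP[nwx nwy]; rewrite tpermD // eq_sym.
Qed.

Lemma pairperm_other (S : {set T}) z :
  #|S| = 2 -> z \in S -> pairperm S z \in S :\ z.
Proof.
have mS w : (w \in S) = (w \in enum S) by rewrite mem_enum.
rewrite cardE /pairperm !inE !mS; have := enum_uniq S.
case: (enum S) => [|x [|y [|? ?]]] //= /andP[]; rewrite !inE => nxy _ _.
by case/orP=> /eqP->; rewrite ?tpermL ?tpermR eqxx ?orbT ?andbT // eq_sym.
Qed.

Lemma prod_perm_fix (I : eqType) (r : seq I) (F : I -> {perm T}) w :
  (forall y, y \in r -> F y w = w) -> (\prod_(y <- r) F y) w = w.
Proof.
move=> Fw; rewrite big_seq; apply: (big_ind (fun g : {perm T} => g w = w)) => //.
- exact: perm1.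
- by move=> g h gw hw; rewrite permM gw hw.
Qed.

Lemma prod_permE_single (I : eqType) (r : seq I) (F : I -> {perm T}) x z :
  uniq r -> x \in r ->
  (forall y, y \in r -> y != x -> F y z = z /\ F y (F x z) = F x z) ->
  (\prod_(y <- r) F y) z = F x z.
Proof.
move=> + xr; case/splitPr: xr => r1 r2.
rewrite cat_uniq /= => /and4P[_ xr1 xr2 _] Fxz.
have {}xr1 : x \notin r1 by apply: contra xr1 => ->.
have r_neq (s : seq I) y : x \notin s -> y \in s -> y != x.
  by move=> xs ys; apply: contraNneq xs => <-.
have r1z : (\prod_(y <- r1) F y) z = z.
  apply: prod_perm_fix => y yr1.
  by case: (Fxz y _ (r_neq _ _ xr1 yr1)); rewrite ?mem_cat ?yr1.
have r2Fxz : (\prod_(y <- r2) F y) (F x z) = F x z.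
  apply: prod_perm_fix => y yr2.
  by case: (Fxz y _ (r_neq _ _ xr2 yr2)); rewrite ?mem_cat ?inE ?yr2 ?orbT.
by rewrite big_cat big_cons !permM r1z r2Fxz.
Qed.

End PermProducts.

Section Brackets.
Variables (T : finType) (B : seq {set T}).
Hypothesis card_line : forall L, L \in B -> #|L| = 4.
Hypothesis ssB : supersimple B.

Lemma uniq_lines : uniq B.
Proof.
apply/(uniqP set0) => i j iB jB eij; apply/eqP/negPn/negP => nij.
by have := ssB iB jB nij; rewrite eij setIid card_line // mem_nth.
Qed.

Lemma eq_lines3 L L' a b z : L \in B -> L' \in B ->
  [/\ a != b, b != z & z != a] ->
  [/\ a \in L, b \in L & z \in L] -> [/\ a \in L', b \in L' & z \in L'] -> L = L'.
Proof.
move=> LB L'B dist [aL bL zL] [aL' bL' zL']; apply/eqP/negPn/negP => nLL'.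
have: 2 < #|L :&: L'|.
  by apply/card_gt2P; exists a, b, z; rewrite !inE aL bL zL aL' bL' zL'.
rewrite ltnNge -(nth_index set0 LB) -(nth_index set0 L'B) ssB ?index_mem //.
by apply: contra nLL' => /eqP eLL'; rewrite -(nth_index set0 LB) eLL' nth_index.
Qed.

Lemma card_line_pair L a b :
  L \in B -> a != b -> a \in L -> b \in L -> #|L :\ a :\ b| = 2.
Proof.
move=> LB nab aL bL; have := cardsD1 a L; have := cardsD1 b (L :\ a).
rewrite (card_line LB) aL !inE (eq_sym b) nab bL => -> /eqP.
by rewrite !add1n !eqSS => /eqP.
Qed.

Lemma br_prodE a b z : a != b -> z != a -> z != b ->
  br B a b z = (\prod_(L <- B | (a \in L) && (b \in L)) pairperm (L :\ a :\ b)) z.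
Proof. by move=> nab nza nzb; rewrite /br (negbTE nab) permM tpermD // eq_sym. Qed.

Lemma br_l a b : br B a b a = b.
Proof.
rewrite /br; case: eqP => [-> | _]; first by rewrite perm1.
rewrite permM tpermL -big_filter prod_perm_fix // => L.
by rewrite mem_filter => /andP[/andP[_ bL] _]; rewrite pairperm_fix // !inE eqxx.
Qed.

Lemma br_sym a b : br B a b = br B b a.
Proof.
rewrite /br eq_sym; case: eqP => // _; rewrite tpermC; congr (_ * _).
apply: eq_big => [L|L _]; first by rewrite andbC.
by rewrite !setDDl setUC.
Qed.

Lemma br_r a b : br B a b b = a.
Proof. by rewrite br_sym br_l. Qed.

Lemma br_off_lines a b z : z != a -> z != b ->
  (forall L, L \in B -> a \in L -> b \in L -> z \notin L) -> br B a b z = z.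
Proof.
move=> nza nzb noL; case: (eqVneq a b) => [<-|nab]; first by rewrite /br eqxx perm1.
rewrite br_prodE // -big_filter prod_perm_fix // => L.
rewrite mem_filter => /andP[/andP[aL bL] LB].
by rewrite pairperm_fix // !inE (negbTE (noL L LB aL bL)) !andbF.
Qed.

Lemma br_on_line L a b z : L \in B -> a != b -> z != a -> z != b ->
  [/\ a \in L, b \in L & z \in L] -> br B a b z = pairperm (L :\ a :\ b) z.
Proof.
move=> LB nab nza nzb [aL bL zL]; set S := L :\ a :\ b.
have zS : z \in S by rewrite !inE nza nzb zL.
have wS : pairperm S z \in S.
  by have := pairperm_other (card_line_pair LB nab aL bL) zS; rewrite inE => /andP[].
(* Another line through a and b meets L only in {a, b}, so its factor fixes S. *)
have off_S L' t : L' \in B -> L' != L -> a \in L' -> b \in L' -> t \in S ->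
    pairperm (L' :\ a :\ b) t = t.
  move=> L'B nL'L aL' bL' tS; apply: pairperm_fix; rewrite !inE.
  apply/negP => /and3P[ntb nta tL']; move: tS; rewrite !inE => /and3P[_ _ tL].
  move/eqP: nL'L; apply.
  by apply: (eq_lines3 (a := a) (b := b) (z := t) L'B LB); split; rewrite // eq_sym.
rewrite br_prodE // -big_filter.
apply: prod_permE_single; first by rewrite filter_uniq // uniq_lines.
  by rewrite mem_filter aL bL.
by move=> L'; rewrite mem_filter => /andP[/andP[aL' bL'] L'B] nL'L; split; apply: off_S.
Qed.

Lemma br_line_other L a b z : L \in B -> a != b -> z != a -> z != b ->
  [/\ a \in L, b \in L & z \in L] -> br B a b z \in L :\ a :\ b :\ z.
Proof.
move=> LB nab nza nzb [aL bL zL]; rewrite (br_on_line LB) //.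
by apply: pairperm_other; [exact: card_line_pair | rewrite !inE nza nzb].
Qed.

Lemma line_through a b z : z != a -> z != b -> br B a b z != z ->
  exists2 L, L \in B & [/\ a \in L, b \in L & z \in L].
Proof.
move=> nza nzb.
case: (boolP (has (fun L : {set T} => [&& a \in L, b \in L & z \in L]) B)).
  by case/hasP=> L LB /and3P[aL bL zL]; exists L.
move/hasPn=> noL; rewrite br_off_lines ?eqxx // => L LB aL bL.
by apply: contra (noL L LB) => zL; rewrite aL bL zL.
Qed.

Lemma brK a b : involutive (br B a b).
Proof.
move=> z; case: (eqVneq a b) => [<-|nab]; first by rewrite /br eqxx !perm1.
case: (eqVneq z a) => [->|nza]; first by rewrite br_l br_r.
case: (eqVneq z b) => [->|nzb]; first by rewrite br_r br_l.
have [fixed|moved] := eqVneq (br B a b z) z; first by rewrite !fixed.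
have [L LB onL] := line_through nza nzb moved.
have := br_line_other LB nab nza nzb onL; rewrite !inE => /and4P[_ nwb nwa wL].
case: (onL) => aL bL _.
rewrite (br_on_line LB nab nwa nwb (And3 aL bL wL)).
by rewrite (br_on_line LB nab nza nzb onL) pairpermK.
Qed.

Lemma brV a b : (br B a b)^-1 = br B a b.
Proof. by apply/permP=> z; rewrite -{1}(brK a b z) permK. Qed.

Lemma br2 a b : br B a b * br B a b = 1.
Proof. by rewrite -{1}brV mulVg. Qed.

Definition conj_law := forall a b c d : T,
  br B a b ^ br B c d = br B (br B c d a) (br B c d b).

Definition adjacent_conj_law := forall a b c : T,
  br B a b ^ br B b c = br B (br B b c a) c.

Definition moveseq_law := forall a b c : T,
  br B b c = moveseq B a [:: b; c; br B b c a].

Lemma conj_law_adjacent : conj_law -> adjacent_conj_law.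
Proof. by move=> conj a b c; rewrite conj br_l. Qed.

Lemma adjacent_conj_law_moveseq : adjacent_conj_law -> moveseq_law.
Proof.
move=> adj a b c /=; rewrite mulg1 [br B c _]br_sym -adj /conjg brV.
by rewrite !mulgA -(mulgA (br B a b)) br2 mulg1 br2 mul1g.
Qed.

Lemma moveseq_law_adjacent : moveseq_law -> adjacent_conj_law.
Proof.
move=> ms a b c; have := ms a b c; rewrite /= mulg1 => E.
rewrite /conjg brV [RHS]br_sym.
transitivity ((br B a b * br B b c)^-1 * br B b c); first by rewrite invMg !brV mulgA.
by rewrite {2}E (mulgA (br B a b)) mulKg.
Qed.

Lemma adjacent_conj_law_conj : adjacent_conj_law -> conj_law.
Proof.
(* By (iii), [c,d] = [a,c][c,d][d,a'] with a' = [c,d]a; consecutive factors are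
   adjacent, so (ii) applies to each of them in turn. *)
move=> adj a b c d; have := adjacent_conj_law_moveseq adj a c d; rewrite /= mulg1 => E.
have Eb : br B c d b = (br B a c * (br B c d * br B d (br B c d a))) b by rewrite -E.
rewrite {1}E !conjgM [br B a b]br_sym adj adj adj [RHS]br_sym; congr (br B _ _).
by rewrite Eb !permM.
Qed.

Lemma line_setE L x y u : L \in B -> [/\ x != y, y != u & u != x] ->
  [/\ x \in L, y \in L & u \in L] -> L = [set x; y; u; br B x y u].
Proof.
move=> LB [nxy nyu nux] onL; have nuy : u != y by rewrite eq_sym.
have := br_line_other LB nxy nux nuy onL; rewrite !inE => /and4P[nvu nvy nvx vL].
case: onL => xL yL uL; apply/eqP; rewrite eq_sym eqEcard; apply/andP; split.
  by apply/subsetP=> t; rewrite !inE -!orbA => /or4P[] /eqP->.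
rewrite card_line //; apply/card_geqP; exists [:: x; y; u; br B x y u]; split=> //.
  rewrite /= !inE !negb_or nxy nyu (eq_sym x) nux (eq_sym x) nvx.
  by rewrite (eq_sym y) nvy (eq_sym u) nvu.
by move=> t; rewrite !inE -!orbA.
Qed.

Lemma br_conj_apply c d a b z : conj_law ->
  br B (br B c d a) (br B c d b) (br B c d z) = br B c d (br B a b z).
Proof. by move=> conj; rewrite -conj /conjg !permM permK. Qed.

Lemma br_image_line c d L : conj_law -> L \in B -> br B c d @: L \in B.
Proof.
move=> conj LB; set g := br B c d.
have /card_gt2P[x [y [u [onL dist]]]] : 2 < #|L| by rewrite card_line.
case: (dist) => nxy nyu nux; have nuy : u != y by rewrite eq_sym.
have := br_line_other LB nxy nux nuy onL; rewrite !inE => /and4P[nvu _ _ _].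
have ginj := @perm_inj _ g.
have gdist : [/\ g x != g y, g y != g u & g u != g x] by rewrite !(inj_eq ginj).
have [L' L'B onL'] : exists2 L', L' \in B & [/\ g x \in L', g y \in L' & g u \in L'].
  by apply: line_through; rewrite ?br_conj_apply // (inj_eq ginj).
rewrite (line_setE LB dist onL) !imsetU !imset_set1 -br_conj_apply //.
by rewrite -(line_setE L'B gdist onL').
Qed.

Lemma design_aut_of_lines (g : {perm T}) :
  (forall L, L \in B -> g @: L \in B) -> design_aut B g.
Proof.
move=> gB; have uB := uniq_lines.
have umap : uniq [seq g @: L | L : {set T} <- B].
  by rewrite map_inj_uniq //; apply/imset_inj/perm_inj.
have sub : {subset [seq g @: L | L : {set T} <- B] <= B}.
  by move=> _ /mapP[L LB ->]; exact: gB.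
have [|_ eqBmap] := uniq_min_size umap sub; first by rewrite size_map.
exact: uniq_perm umap uB eqBmap.
Qed.

Lemma moveseq_cat a s t :
  moveseq B a (s ++ t) = moveseq B a s * moveseq B (last a s) t.
Proof. by elim: s a => [|b s IH] a /=; rewrite ?mul1g // IH mulgA. Qed.

Lemma moveseq_image_line a s L : conj_law -> L \in B -> moveseq B a s @: L \in B.
Proof.
move=> conj; elim: s a L => [|b s IH] a L LB /=.
  by rewrite (eq_imset _ (@perm1 T)) imset_id.
rewrite (eq_imset _ (permM _ _)) imset_comp.
by apply: IH; apply: br_image_line.
Qed.

Definition br_gens := [set br B x.1 x.2 | x : T * T].

Lemma moveseq_gen a s : moveseq B a s \in <<br_gens>>.
Proof.
elim: s a => [|b s IH] a /=; first exact: group1.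
by rewrite groupM // mem_gen //; apply/imsetP; exists (a, b).
Qed.

Lemma gen_Linf oo g : moveseq_law -> g \in <<br_gens>> -> Linf B oo g.
Proof.
move=> ms /gen_prodgP[n [c cgen ->]]; elim: n c cgen => [|n IH] c cgen.
  by exists [::]; rewrite big_ord0.
rewrite big_ord_recr /=.
have [s ->] := IH (fun i => c (widen_ord (leqnSn n) i)) (fun i => cgen _).
case/imsetP: (cgen ord_max) => [[b d] _ ->] /=.
by exists (s ++ [:: b; d; br B b d (last oo s)]); rewrite moveseq_cat -ms.
Qed.

End Brackets.

Theorem lemma2p7 (T : finType) (n lambda : nat) (B : seq {set T})
  (Hdes : design_2_4 n lambda B) (Hss : supersimple B) :
  let br := br B in
  let c1 := forall a b c d : T,
      (br a b) ^ (br c d) = br (br c d a) (br c d b) in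
  let c2 := forall a b c : T,
      (br a b) ^ (br b c) = br (br b c a) c in
  let c3 := forall a b c : T,
      br b c = moveseq B a [:: b; c; br b c a] in
  [/\ (c1 <-> c2), (c2 <-> c3) &
      (c1 -> forall oo : T,
         (exists G : {group {perm T}}, forall g, g \in G <-> Linf B oo g)
         /\ (forall g, Linf B oo g -> design_aut B g))].
Proof.
have [_ card_line _] := Hdes; move=> br0 c1 c2 c3.
have adj_ms : c2 -> c3 := adjacent_conj_law_moveseq card_line Hss.
split.
- by split; [apply: conj_law_adjacent | apply: adjacent_conj_law_conj].
- by split; [apply: adj_ms | apply: moveseq_law_adjacent].
move=> conj oo; split.
  exists <<br_gens B>>%G => g; split; last by case=> s ->; apply: moveseq_gen.
  by apply/gen_Linf/adj_ms/conj_law_adjacent.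
by move=> g [s ->]; apply: design_aut_of_lines => // L; apply: moveseq_image_line.
Qed.
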